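(* Let $f\colon X\to X$ be a homeomorphism of a metric space $X$ and let $k\in\mathbb{Z}$. Every Borel probability measure that is inner-distal with respect to $f$ is also inner-distal with respect to $f^k$. In particular, if $f$ is inner-distal, then $f^k$ is inner-distal.
   Context: For a homeomorphism $g$ of $(X,d)$, $\mathcal{P}_g(x)=\{y\colon \inf_{n\in\mathbb{Z}} d(g^n(x),g^n(y))=0\}$. $g$ is inner-distal if $\operatorname{Int}\mathcal{P}_g(x)=\emptyset$ for all $x$; a Borel probability measure $\mu$ is inner-distal w.r.t. $g$ if $\mu(\operatorname{Int}\mathcal{P}_g(x))=0$ for all $x$. *)

From HB Require Import structures.
From mathcomp Require Import all_boot all_order all_algebra.
From mathcomp Require Import all_classical all_reals all_analysis.

Set Implicit Arguments.
Unset Strict Implicit.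
Unset Printing Implicit Defensive.

Import Order.TTheory GRing.Theory Num.Theory.
Local Open Scope classical_set_scope.
Local Open Scope ring_scope.

(* metric spaces equipped with a distinguished point (needed because
   MathComp-Analysis measurable types are pointed) *)
#[short(type="pointedMetricType")]
HB.structure Definition PointedMetric (K : numDomainType) :=
  { M of Pointed M & Metric K M }.

Definition borel (R : realType) (X : pointedMetricType R) :=
  g_sigma_algebraType (@open X).

Section InnerDistal.
Context {R : realType} {X : metricType R}.

Definition homeomorphism (g ginv : X -> X) : Prop :=
  [/\ continuous g, continuous ginv, cancel g ginv & cancel ginv g].

Definition zpow (g ginv : X -> X) (n : int) : X -> X :=
  match n with
  | Posz m => iter m g
  | Negz m => iter m.+1 ginv
  end.

Definition proximal_cell (g ginv : X -> X) (x : X) : set X :=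
  [set y | inf [set mdist (zpow g ginv n x) (zpow g ginv n y) | n in [set: int]] = 0].

Definition inner_distal (g ginv : X -> X) : Prop :=
  forall x : X, interior (proximal_cell g ginv x) = set0.

Definition inner_distal_measure (g ginv : X -> X) (mu : set X -> \bar R) : Prop :=
  forall x : X, mu (interior (proximal_cell g ginv x)) = 0%E.

End InnerDistal.

From HB Require Import structures.
From mathcomp Require Import all_boot all_order all_algebra.
From mathcomp Require Import all_classical all_reals all_analysis.

(* Since (f^k)^n = f^(kn), the distances d((f^k)^n x, (f^k)^n y) form a
   subfamily of the distances d(f^m x, f^m y).  These are nonnegative, so if
   the infimum of the subfamily is 0 then so is the infimum of the whole
   family: P_{f^k}(x) is contained in P_f(x).  Interiors and measures are
   monotone, hence both kinds of inner-distality pass from f to f^k. *)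

Import Order.TTheory GRing.Theory Num.Theory.
Local Open Scope classical_set_scope.
Local Open Scope ring_scope.

Lemma inf_eq0_subset (R : realType) (A B : set R) :
  A `<=` B -> nonempty A -> lbound B 0 -> inf A = 0 -> inf B = 0.
Proof.
move=> AB [a Aa] B_ge0 infA0.
have neB : nonempty B by exists a; apply: AB.
apply/eqP; rewrite eq_le lb_le_inf // andbT -infA0.
by apply: lb_le_inf; [exists a | move=> b /AB Bb; apply: ge_inf => //; exists 0].
Qed.

Section IntegerIterates.
Context {R : realType} {X : metricType R}.
Variables (f finv : X -> X).
Hypotheses (fK : cancel f finv) (finvK : cancel finv f).

Lemma zpowN (k : int) (x : X) : zpow finv f k x = zpow f finv (- k) x.
Proof. by case: k => [[|m]|m]. Qed.

Lemma zpow_addr1 (n : int) (x : X) : zpow f finv (n + 1) x = f (zpow f finv n x).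
Proof.
by case: n => [m|[|m]] /=; rewrite ?addn1 ?subn1 //= finvK.
Qed.

Lemma zpow_subr1 (n : int) (x : X) : zpow f finv (n - 1) x = finv (zpow f finv n x).
Proof. by rewrite -{2}(subrK 1 n) zpow_addr1 fK. Qed.

Lemma zpowD (a b : int) (x : X) :
  zpow f finv (a + b) x = zpow f finv a (zpow f finv b x).
Proof.
elim/int_rect: a => [|n IH|n IH]; first by rewrite add0r.
- by rewrite -addn1 PoszD addrAC zpow_addr1 IH -zpow_addr1.
- by rewrite -addn1 PoszD opprD addrAC zpow_subr1 IH -zpow_subr1.
Qed.

Lemma iter_zpow (k : int) (m : nat) (x : X) :
  iter m (zpow f finv k) x = zpow f finv (k * m%:Z) x.
Proof.
elim: m => [|m IH]; first by rewrite mulr0.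
by rewrite iterS IH -zpowD -addn1 PoszD mulrDr mulr1 addrC.
Qed.

Lemma zpowM (k n : int) (x : X) :
  zpow (zpow f finv k) (zpow finv f k) n x = zpow f finv (k * n) x.
Proof.
case: n => m; first exact: iter_zpow.
by rewrite /= -iterS (eq_iter (zpowN k)) iter_zpow NegzE mulrN mulNr.
Qed.

Lemma proximal_cell_zpow_sub (k : int) (x : X) :
  proximal_cell (zpow f finv k) (zpow finv f k) x `<=` proximal_cell f finv x.
Proof.
move=> y; apply: inf_eq0_subset.
- by move=> _ [n _ <-]; exists (k * n) => //; rewrite !zpowM.
- by eexists; exists 0.
- by move=> _ [n _ <-]; exact: mdist_ge0.
Qed.

Lemma interior_proximal_cell_zpow_sub (k : int) (x : X) :
  interior (proximal_cell (zpow f finv k) (zpow finv f k) x)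
  `<=` interior (proximal_cell f finv x).
Proof. exact/interiorS/proximal_cell_zpow_sub. Qed.

Lemma inner_distal_zpow (k : int) :
  inner_distal f finv -> inner_distal (zpow f finv k) (zpow finv f k).
Proof.
by move=> fD x; rewrite -subset0 -(fD x); exact: interior_proximal_cell_zpow_sub.
Qed.

End IntegerIterates.

Lemma inner_distal_measure_zpow (R : realType) (X : pointedMetricType R)
    (f finv : X -> X) (k : int) (mu : {content set (borel X) -> \bar R}) :
  cancel f finv -> cancel finv f ->
  inner_distal_measure f finv mu ->
  inner_distal_measure (zpow f finv k) (zpow finv f k) mu.
Proof.
move=> fK finvK fD x; apply/eqP; rewrite eq_le measure_ge0 andbT -(fD x).
have open_mD (A : set (borel X)) : @open X A -> A \in measurable.
  by move=> oA; rewrite inE; apply: sub_sigma_algebra.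
apply: le_measure; [exact/open_mD/open_interior.. |].
exact: interior_proximal_cell_zpow_sub.
Qed.

Theorem lemma3p4 (R : realType) (X : pointedMetricType R) (f finv : X -> X) (k : int) :
  homeomorphism f finv ->
  (forall mu : probability (borel X) R,
      inner_distal_measure f finv mu ->
      inner_distal_measure (zpow f finv k) (zpow finv f k) mu) /\
  (inner_distal f finv -> inner_distal (zpow f finv k) (zpow finv f k)).
Proof.
move=> [_ _ fK finvK]; split.
- by move=> mu; exact: inner_distal_measure_zpow.
- exact: inner_distal_zpow.
Qed.
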